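(* Let $n \geq 3$ and let $S$ be a $4$-cap free, $n$-cup free configuration. If $S$ contains a pair of interweaved laced $(n-1)$-cups, then $S$ contains a $(3, n-1)$-gon.
   Context: A configuration is a finite set $S$ of points with a linear order $<$ and, for every $3$-element subset, an arbitrary assignment declaring it either a cap or a cup. Points $x_1<\cdots<x_a$ form an $a$-cup (resp. $a$-cap) if every consecutive triple $\{x_{i-1},x_i,x_{i+1}\}$, $1<i<a$, is assigned cup (resp. cap); $1$- and $2$-element sets are both caps and cups. The size of a cup is its number of points; a cup $x_1\cdots x_a$ runs from (starts with) $x_1$ to (ends with) $x_a$. Two cups $C_1$, $C_2$ running from $p$ to $r$ and from $q$ to $s$ respectively are interweaved if $p<q\le r<s$. An $(n-1)$-cup $C$ from $p$ to $q$ is laced if there exist a cup $C_p$ ending with $p$ and a cup $C_q$ starting with $q$ such that $|C_p|+|C_q|=n-1$. A (weak) $(a,b)$-gon is a pair consisting of an $a$-cap and a $b$-cup with the same two endpoints (they may share other vertices). *)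

From mathcomp Require Import all_boot.
Set Implicit Arguments. Unset Strict Implicit. Unset Printing Implicit Defensive.

(* A configuration on N points: the points are 'I_N with the natural linear
   order; [c x y z] (meaningful for x < y < z) is true iff the triple
   {x,y,z} is declared a cup, false iff it is declared a cap. *)
Definition config (N : nat) := 'I_N -> 'I_N -> 'I_N -> bool.

Fixpoint consec3 (T : Type) (P : T -> T -> T -> bool) (s : seq T) : bool :=
  match s with
  | x :: ((y :: z :: _) as t) => P x y z && consec3 P t
  | _ => true
  end.

Definition increasing N (s : seq 'I_N) : bool :=
  sorted (fun x y : 'I_N => (x < y)%N) s.

Definition is_cup N (c : config N) (s : seq 'I_N) : bool :=
  increasing s && consec3 c s.
Definition is_cap N (c : config N) (s : seq 'I_N) : bool :=
  increasing s && consec3 (fun x y z => ~~ c x y z) s.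

Definition starts_with N (s : seq 'I_N) (p : 'I_N) : bool := ohead s == Some p.
Definition ends_with N (s : seq 'I_N) (q : 'I_N) : bool := ohead (rev s) == Some q.

Definition runs N (s : seq 'I_N) (p q : 'I_N) : bool :=
  starts_with s p && ends_with s q.

Definition laced N (c : config N) (n : nat) (C : seq 'I_N) : Prop :=
  exists p q : 'I_N,
    [/\ is_cup c C, size C = n.-1, runs C p q &
     exists Cp Cq : seq 'I_N,
       [/\ is_cup c Cp, ends_with Cp p, is_cup c Cq, starts_with Cq q &
           size Cp + size Cq = n.-1]].

Definition cap_free N (c : config N) (a : nat) : Prop :=
  forall s, is_cap c s -> size s <> a.
Definition cup_free N (c : config N) (a : nat) : Prop :=
  forall s, is_cup c s -> size s <> a.

Definition has_gon N (c : config N) (a b : nat) : Prop :=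
  exists (A B : seq 'I_N) (x z : 'I_N),
    [/\ is_cap c A /\ size A = a, is_cup c B /\ size B = b, runs A x z & runs B x z].

(* Let C1 run from p to r and C2 from q to s, let u be the point of C1 before r
   and v the point of C2 after q.  As there is no n-cup, neither p :: C2 nor
   rcons C1 s is a cup, so (p, q, v) and (u, r, s) are caps.
   If q = r, replacing r by v in C1 or q by u in C2 gives an (n-1)-cup, hence a
   gon with the cap (p, r, v) or (u, r, s), unless both fail, which exhibits a
   4-cap through u and v.
   If q < r, let F, G be the cups lacing C1; F ++ q :: G would be an n-cup, so
   one of the triples of it at p, q or r is a cap.  At q we get a gon with C1,
   at p a 4-cap with (p, q, v); so the triple (q, r, g) after r is a cap.  The
   same argument for C2 and the point r yields a gon with C2, or a 4-cap
   through (q, r, g), or a 4-cap through (u, r, s). *)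

From mathcomp Require Import all_boot zify.
Set Implicit Arguments. Unset Strict Implicit. Unset Printing Implicit Defensive.

Section Seam.
Variables (T : Type) (P : T -> T -> T -> bool).

(* The only consecutive triple of [s ++ x :: t] lying in neither [rcons s x]
   nor [x :: t]. *)
Definition seam (s : seq T) (x : T) (t : seq T) : bool :=
  match s, t with _ :: _, y :: _ => P (last x s) x y | _, _ => true end.

Lemma seam_rcons s w x y t : seam (rcons s w) x (y :: t) = P w x y.
Proof. by case: s => [|a s] //=; rewrite last_rcons. Qed.

Lemma seam_head s x y t : seam s x (y :: t) = seam s x [:: y].
Proof. by case: s. Qed.

Lemma consec3_cons2 a b u :
  consec3 P [:: a, b & u] = (if u is z :: _ then P a b z else true) && consec3 P (b :: u).
Proof. by case: u. Qed.

Lemma consec3_cat s x t :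
  consec3 P (s ++ x :: t) = [&& consec3 P (rcons s x), consec3 P (x :: t) & seam s x t].
Proof.
elim: s => [|a s IH]; first by rewrite andbT.
case: s IH => [|b s] IH; first by case: t {IH} => [|y t] //=; rewrite andbC.
have -> : seam [:: a, b & s] x t = seam (b :: s) x t by case: t {IH}.
rewrite cat_cons in IH.
rewrite cat_cons rcons_cons !consec3_cons2 IH.
by case: s {IH} => [|z s]; rewrite andbA.
Qed.

End Seam.

Section Cups.
Variables (N : nat) (c : config N).
Implicit Types (s t F G : seq 'I_N) (p q r x y : 'I_N).

Lemma is_cup_cat s x t :
  is_cup c (s ++ x :: t) = [&& is_cup c (rcons s x), is_cup c (x :: t) & seam c s x t].
Proof.
rewrite /is_cup /increasing sorted_cat_cons consec3_cat -[path _ x t]/(sorted _ (x :: t)).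
by case: (sorted _ (rcons s x)); case: (sorted _ (x :: t)); case: (consec3 c (rcons s x)).
Qed.

Lemma cup_lt s x y t : is_cup c (s ++ x :: y :: t) -> x < y.
Proof. by rewrite /is_cup /increasing sorted_cat_cons => /andP[/andP[_ /andP[]]]. Qed.

Lemma cup_last_lt s x y : is_cup c (rcons (rcons s x) y) -> x < y.
Proof. by rewrite -cats1 cat_rcons; apply: cup_lt. Qed.

Lemma is_cup2 x y : is_cup c [:: x; y] = (x < y).
Proof. by rewrite /is_cup /increasing /= !andbT. Qed.

Lemma cup_bridge F p q r G :
  is_cup c (rcons F p) -> is_cup c (r :: G) -> p < q -> q < r ->
  seam c F p [:: q] -> c p q r -> seam c [:: q] r G ->
  is_cup c (rcons F p ++ q :: r :: G).
Proof.
move=> cF cG pq qr Fpq pqr qrG.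
rewrite cat_rcons is_cup_cat cF seam_head Fpq andbT.
rewrite -[p :: _]/([:: p] ++ q :: r :: G) is_cup_cat is_cup2 pq [seam _ _ _ _]/= pqr andbT.
by rewrite -[q :: _]/([:: q] ++ r :: G) is_cup_cat is_cup2 qr cG.
Qed.

End Cups.

Section Runs.
Variable N : nat.
Implicit Types (s : seq 'I_N) (p q x : 'I_N).

Lemma starts_with_rcons s x p : starts_with s p -> starts_with (rcons s x) p.
Proof. by case: s. Qed.

Lemma ends_with_rcons s x q : ends_with (rcons s x) q = (x == q).
Proof. by rewrite /ends_with rev_rcons. Qed.

Lemma ends_with_cons2 x y s q : ends_with [:: x, y & s] q = ends_with (y :: s) q.
Proof. by rewrite /ends_with !rev_cons; case: (rev s). Qed.

Lemma runs_inj s p q p' q' : runs s p q -> runs s p' q' -> p = p' /\ q = q'.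
Proof. by rewrite /runs /starts_with /ends_with => /andP[/eqP-> /eqP->] /andP[/eqP[->] /eqP[->]]. Qed.

Lemma runs_split_last s p q : runs s p q -> 1 < size s ->
  exists A u, s = rcons (rcons A u) q /\ starts_with (rcons A u) p.
Proof.
case/lastP: s => [|s x] //; rewrite /runs ends_with_rcons => /andP[st /eqP->].
case/lastP: s st => [|A u] // st _; exists A, u; split=> //.
by case: A st.
Qed.

Lemma runs_split_head s p q : runs s p q -> 1 < size s ->
  exists v B, s = p :: v :: B /\ ends_with (v :: B) q.
Proof.
case: s => [|x [|v B]] //; rewrite /runs /starts_with ends_with_cons2.
by case/andP=> /eqP[->] en _; exists v, B.
Qed.

End Runs.

Section Gons.
Variables (N n : nat) (c : config N).
Hypotheses (n_ge3 : 2 < n) (capF : cap_free c 4) (cupF : cup_free c n).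
Implicit Types (A B C : seq 'I_N) (p q r s u v w x y z : 'I_N).

Lemma cap3_gon x y z B : x < y -> y < z -> ~~ c x y z ->
  is_cup c B -> size B = n.-1 -> runs B x z -> has_gon c 3 n.-1.
Proof.
move=> xy yz nxyz cB szB runB; exists [:: x; y; z], B, x, z; split=> //.
- by rewrite /is_cap /increasing /= xy yz nxyz.
- by rewrite /runs /starts_with -[[:: x; y; z]]/(rcons [:: x; y] z) ends_with_rcons !eqxx.
Qed.

Lemma no_cap4 w x y z : w < x -> x < y -> y < z -> ~~ c w x y -> ~~ c x y z -> False.
Proof.
move=> wx xy yz nwxy nxyz; apply: (capF (s := [:: w; x; y; z])) => //.
by rewrite /is_cap /increasing /= wx xy yz nwxy nxyz.
Qed.

Lemma cap_before_maxcup p q v B :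
  p < q -> is_cup c [:: q, v & B] -> size [:: q, v & B] = n.-1 -> ~~ c p q v.
Proof.
move=> pq cC szC; apply/negP=> pqv; apply: (cupF (s := [:: p, q, v & B])).
  by rewrite -[p :: _]/([:: p] ++ q :: v :: B) is_cup_cat is_cup2 pq cC.
by rewrite /= in szC *; lia.
Qed.

Lemma cap_after_maxcup A u r s :
  is_cup c (rcons (rcons A u) r) -> size (rcons (rcons A u) r) = n.-1 -> r < s -> ~~ c u r s.
Proof.
move=> cC szC rs; apply/negP=> urs; apply: (cupF (s := rcons (rcons (rcons A u) r) s)).
  by rewrite -cats1 cat_rcons is_cup_cat cC is_cup2 rs seam_rcons.
by rewrite size_rcons szC; lia.
Qed.

Lemma laced_triple_cap C p q r : laced c n C -> runs C p r -> p < q -> q < r ->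
  [\/ ~~ c p q r, exists2 w : 'I_N, w < p & ~~ c w p q
  | exists2 g : 'I_N, r < g & ~~ c q r g].
Proof.
move=> [p' [r' [_ _ runC' [F [G [cF endF cG stG szFG]]]]]] runC pq qr.
have [ep er] := runs_inj runC runC'; subst p' r'.
case/lastP: F cF endF szFG => [|F p0] // cF; rewrite ends_with_rcons => /eqP ep0 szFG; subst p0.
case: G cG stG szFG => [|r0 G] // cG /eqP[er0] szFG; subst r0.
have [pqr | ] := boolP (c p q r); last by move=> npqr; apply: Or31.
have [Fpq | ] := boolP (seam c F p [:: q]); last first.
  case/lastP: F cF {szFG} => [|F w] // cF; rewrite seam_rcons => nwpq.
  by apply: Or32; exists w => //; apply: cup_last_lt cF.
have [qrG | ] := boolP (seam c [:: q] r G); last first.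
  case: G cG {szFG} => [|g G] // cG nqrg.
  by apply: Or33; exists g => //; apply: (cup_lt (s := [::]) cG).
exfalso; move: (cup_bridge cF cG pq qr Fpq pqr qrG) => /cupF; apply.
by rewrite size_cat /=; rewrite /= in szFG; lia.
Qed.

Lemma abutting_cups_gon p s A u r v B :
  p < r -> r < s ->
  is_cup c (rcons (rcons A u) r) -> size (rcons (rcons A u) r) = n.-1 ->
  starts_with (rcons A u) p ->
  is_cup c [:: r, v & B] -> size [:: r, v & B] = n.-1 -> ends_with (v :: B) s ->
  ~~ c p r v -> ~~ c u r s -> has_gon c 3 n.-1.
Proof.
move=> pr rs cC1 sz1 stp cC2 sz2 ens nprv nurs.
have ur : u < r := cup_last_lt cC1.
have rv : r < v := cup_lt (s := [::]) cC2.
have cAu : is_cup c (rcons A u).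
  by move: cC1; rewrite -cats1 cat_rcons is_cup_cat => /and3P[].
have cvB : is_cup c (v :: B).
  by move: cC2; rewrite -[r :: _]/([:: r] ++ v :: B) is_cup_cat => /and3P[].
have [Auv | nAuv] := boolP (seam c A u [:: v]).
  apply: (cap3_gon (B := rcons (rcons A u) v) pr rv nprv).
  - by rewrite -cats1 cat_rcons is_cup_cat cAu is_cup2 (ltn_trans ur rv).
  - by rewrite !size_rcons in sz1 *.
  - by rewrite /runs ends_with_rcons eqxx andbT starts_with_rcons.
have [uvB | nuvB] := boolP (seam c [:: u] v B).
  apply: (cap3_gon (B := [:: u, v & B]) ur rs nurs) => //.
  - by rewrite -[u :: _]/([:: u] ++ v :: B) is_cup_cat is_cup2 (ltn_trans ur rv) cvB.
  - by rewrite /runs ends_with_cons2 ens andbT /starts_with.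
case/lastP: A cAu nAuv {cC1 sz1 stp} => [|A w] // cAu; rewrite seam_rcons => nwuv.
case: B cC2 nuvB {cvB sz2 ens nurs} => [|z B] // cC2 nuvz.
by case: (no_cap4 (cup_last_lt cAu) (ltn_trans ur rv) (cup_lt (s := [:: r]) cC2) nwuv nuvz).
Qed.

End Gons.

Theorem lemma5p2 (N n : nat) (c : config N) :
  3 <= n -> cap_free c 4 -> cup_free c n ->
  (exists (C1 C2 : seq 'I_N) (p q r s : 'I_N),
      [/\ [/\ is_cup c C1, size C1 = n.-1, runs C1 p r & laced c n C1],
          [/\ is_cup c C2, size C2 = n.-1, runs C2 q s & laced c n C2] &
          [&& p < q, q <= r & r < s]]) ->
  has_gon c 3 n.-1.
Proof.
move=> n_ge3 capF cupF [C1 [C2 [p [q [r [s [[cC1 sz1 run1 lac1] [cC2 sz2 run2 lac2]]]]]]]].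
case/and3P=> pq qr rs.
have size_gt1 (C : seq 'I_N) : size C = n.-1 -> 1 < size C by move->; lia.
have [A [u [eC1 stA]]] := runs_split_last run1 (size_gt1 _ sz1).
have [v [B [eC2 enB]]] := runs_split_head run2 (size_gt1 _ sz2).
subst C1 C2.
have npqv := cap_before_maxcup n_ge3 cupF pq cC2 sz2.
have nurs := cap_after_maxcup n_ge3 cupF cC1 sz1 rs.
have ur := cup_last_lt cC1.
have qv := cup_lt (s := [::]) cC2.
move: qr; rewrite leq_eqVlt => /orP[/eqP/val_inj eqr | qr].
  by subst r; apply: (abutting_cups_gon capF pq rs cC1 sz1 stA cC2 sz2 enB).
case: (laced_triple_cap n_ge3 cupF lac1 run1 pq qr) => [npqr | [w wp nwpq] | [g rg nqrg]].
- exact: cap3_gon pq qr npqr cC1 sz1 run1.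
- by case: (no_cap4 capF wp pq qv nwpq npqv).
case: (laced_triple_cap n_ge3 cupF lac2 run2 qr rs) => [nqrs | [d dq ndqr] | [e se nrse]].
- exact: cap3_gon qr rs nqrs cC2 sz2 run2.
- by case: (no_cap4 capF dq qr rg ndqr nqrg).
- by case: (no_cap4 capF ur rs se nurs nrse).
Qed.
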